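(* Let $f$ be a diffeomorphism of $M=\mathbb{R}^d/\mathbb{Z}^d$ with an ergodic invariant Borel probability measure $\mu$, and let $A_1\subseteq A_2\subseteq\cdots$ be open sets with $A=\bigcup_mA_m$ $f$-invariant, $\mu(A)=1$, and $\mu(A_m)<1$ for all $m$. For $\varepsilon>0$ let $P_\varepsilon$ be the set of $x\in M$ for which there are infinitely many indices $m_1<m_2<\cdots$ and integers $j_i\ge\varepsilon/(1-\mu(A_{m_i}))$ such that $f^l(x)\in A_{m_i}$ for all $l$ with $-j_i\le l\le j_i$. Then $\mu(P_\varepsilon)\ge1-4\varepsilon$. *)

From HB Require Import structures.
From mathcomp Require Import all_boot all_order all_algebra.
From mathcomp Require Import all_classical all_reals all_analysis.
Set Implicit Arguments. Unset Strict Implicit. Unset Printing Implicit Defensive.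
Import Order.TTheory GRing.Theory Num.Theory.
Import numFieldNormedType.Exports.
Local Open Scope classical_set_scope.
Local Open Scope ring_scope.

Section Torus0.
Variables (R : realType) (d : nat).

Definition fracr (r : R) : R := r - (Num.floor r)%:~R.
Definition frac (x : 'rV[R]_d) : 'rV[R]_d := map_mx fracr x.

Definition in_fund (x : 'rV[R]_d) : bool :=
  [forall i, (0 <= x ord0 i) && (x ord0 i < 1)].

(** The torus M = R^d / Z^d, each point represented by its unique
    representative in the fundamental domain [0,1)^d. *)
Definition torus := {x : 'rV[R]_d | in_fund x}.

Lemma fracr_itv (r : R) : (0 <= fracr r) && (fracr r < 1).
Proof.
rewrite /fracr subr_ge0 real_floor_le ?num_real //=.
have := real_floorD1_gt (num_real r).
by rewrite intrD ltrBlDl addrC.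
Qed.

Lemma frac_fund x : in_fund (frac x).
Proof. by apply/forallP => i; rewrite mxE fracr_itv. Qed.

Definition proj (x : 'rV[R]_d) : torus := exist _ (frac x) (frac_fund x).

End Torus0.

HB.instance Definition _ (R : realType) (d : nat) :=
  Choice.copy (torus R d) {x : 'rV[R]_d | in_fund x}.
HB.instance Definition _ (R : realType) (d : nat) :=
  isPointed.Build (torus R d) (proj 0).

Section Torus.
Variables (R : realType) (d : nat).
Local Notation torus := (torus R d).
Local Notation proj := (@proj R d).

Definition torus_open (U : set torus) : Prop := open (proj @^-1` U).

Definition torusB : measurableType _ := g_sigma_algebraType torus_open.

(** C^1 maps R^d -> R^d: all directional derivatives exist everywhere
    and depend continuously on the point (equivalent to C^1 in finite
    dimension). *)
Definition C1 (F : 'rV[R]_d -> 'rV[R]_d) : Prop :=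
  continuous F /\
  forall v : 'rV[R]_d, (forall x, derivable F x v) /\ continuous (fun x => 'D_v F x).

Definition C1_torus (h : torus -> torus) : Prop :=
  exists F : 'rV[R]_d -> 'rV[R]_d, C1 F /\ forall x, proj (F x) = h (proj x).

Definition torus_diffeo (f g : torus -> torus) : Prop :=
  cancel f g /\ cancel g f /\ C1_torus f /\ C1_torus g.

Definition iterz (f g : torus -> torus) (l : int) : torus -> torus :=
  match l with
  | Posz n => iter n f
  | Negz n => iter n.+1 g
  end.

Definition invariant_measure (f : torus -> torus)
  (mu : probability torusB R) : Prop :=
  forall A : set torusB, measurable A -> mu (f @^-1` A) = mu A.

Definition ergodic (f : torus -> torus) (mu : probability torusB R) : Prop :=
  forall A : set torusB, measurable A -> f @^-1` A = A ->
    mu A = 0%E \/ mu A = 1%E.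

Definition Peps (f g : torus -> torus) (mu : probability torusB R)
  (A : nat -> set torus) (eps : R) : set torus :=
  [set x | exists ms : nat -> nat, (forall i, (ms i < ms i.+1)%N) /\
     forall i, exists j : nat,
       eps / (1 - fine (mu (A (ms i)))) <= j%:R /\
       forall l : int, - (j%:Z) <= l <= j%:Z -> A (ms i) (iterz f g l x)].

End Torus.

From Pilot Require Import Defs.
From HB Require Import structures.
From mathcomp Require Import all_boot all_order all_algebra.
From mathcomp Require Import all_classical all_reals all_analysis.
From mathcomp Require Import ring lra zify.
Import Order.TTheory GRing.Theory Num.Theory.
Import numFieldNormedType.Exports.
Set Implicit Arguments. Unset Strict Implicit. Unset Printing Implicit Defensive.
Local Open Scope classical_set_scope.
Local Open Scope ring_scope.

(* Fix m and put a = 1 - mu(A_m).  By invariance each of the sets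
   f^{-k}(A_m), f^{k}(A_m), k <= j, has measure 1 - a, so the points whose
   orbit segment [f^{-j} x, f^j x] stays in A_m have measure at least
   1 - 2(j+1)a.  With j the least integer >= eps/a this is >= 1 - 2 eps - 4 a,
   hence >= 1 - 4 eps as soon as mu(A_m) >= 1 - eps/2, which holds for all
   large m because A_m increases to a set of full measure.  P_eps is the
   lim sup of these sets, and the measure of a lim sup dominates the
   measures of all tails. *)

Section ProbabilityBounds.
Context d (T : measurableType d) (R : realType) (mu : probability T R).

Lemma probability_fineK (S : set T) : measurable S -> mu S = (fine (mu S))%:E.
Proof. by move=> mS; rewrite fineK // fin_num_measure. Qed.

Lemma probabilityI_ge (X Y : set T) (a b : R) :
  measurable X -> measurable Y ->
  ((1 - a)%:E <= mu X)%E -> ((1 - b)%:E <= mu Y)%E ->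
  ((1 - (a + b))%:E <= mu (X `&` Y))%E.
Proof.
move=> mX mY.
have mXY := measurableI _ _ mX mY.
have union_bound : (mu (~` (X `&` Y)) <= mu (~` X) + mu (~` Y))%E.
  by rewrite setCI; apply: measureU2; apply: measurableC.
move: union_bound; rewrite !probability_setC //.
rewrite (probability_fineK mX) (probability_fineK mY) (probability_fineK mXY).
by rewrite -!EFinB -EFinD !lee_fin; lra.
Qed.

Lemma probability_bigcap_ge n (S : nat -> set T) (a : R) :
  (forall k, (k < n)%N -> measurable (S k)) ->
  (forall k, (k < n)%N -> ((1 - a)%:E <= mu (S k))%E) ->
  ((1 - n%:R * a)%:E <= mu (\bigcap_(k < n) S k))%E.
Proof.
elim: n => [|n IH] mS muS.
  by rewrite bigcap_mkord big_ord0 probability_setT mul0r subr0.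
have mS' k : (k < n)%N -> measurable (S k) by move=> kn; apply: mS; lia.
have muS' k : (k < n)%N -> ((1 - a)%:E <= mu (S k))%E.
  by move=> kn; apply: muS; lia.
rewrite bigcap_mkord big_ord_recr /= -bigcap_mkord -natr1 mulrDl mul1r.
apply: probabilityI_ge => //; last by apply: muS.
- by apply: bigcap_measurableType => k; exact: mS'.
- exact: mS.
- exact: IH.
Qed.

Lemma probability_lim_sup_set_ge (B : (set T)^nat) (c : \bar R) :
  (forall k, measurable (B k)) ->
  (forall n, (c <= mu (\bigcup_(k in [set k | (n <= k)%N]) B k))%E) ->
  (c <= mu (lim_sup_set B))%E.
Proof.
move=> mB tail_ge.
have fin : (mu (\bigcup_(k in [set k | (0 <= k)%N]) B k) < +oo)%E.
  by apply: le_lt_trans (probability_le1 mu _) (ltry _); exact: bigcup_measurable.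
have cv := lim_sup_set_cvg mu B mB fin.
rewrite -(cvg_lim (@ereal_hausdorff R) cv).
by apply: lime_ge; [apply/cvg_ex; eexists; exact: cv | exact: nearW].
Qed.

Lemma nondecreasing_measure_gt (A : (set T)^nat) (x : \bar R) :
  (forall m, measurable (A m)) -> (forall m, A m `<=` A m.+1) ->
  (x < mu (\bigcup_m A m))%E -> exists m, (x < mu (A m))%E.
Proof.
move=> mA ndA; apply: contraPP => /forallNP small.
have cv : (mu \o A) @ \oo --> mu (\bigcup_m A m).
  apply: nondecreasing_cvg_mu => //; first exact: bigcupT_measurable.
  by apply/nondecreasing_seqP => m; apply/subsetPset.
apply/negP; rewrite -leNgt -(cvg_lim (@ereal_hausdorff R) cv).
apply: lime_le; first by apply/cvg_ex; eexists; exact: cv.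
by apply: nearW => m /=; rewrite leNgt; apply/negP; exact: small.
Qed.

End ProbabilityBounds.

Lemma exists_nat_between (R : realType) (c : R) :
  0 <= c -> exists j : nat, c <= j%:R <= c + 1.
Proof.
move=> c0; exists (Num.truncn c).+1; apply/andP; split.
  exact/ltW/truncnS_gt.
by rewrite -natr1 lerD2r truncn_le.
Qed.

Section TorusTopology.
Variables (R : realType) (d : nat).

Lemma torus_open_preimage (h : torus R d -> torus R d) (U : set (torus R d)) :
  C1_torus h -> torus_open U -> torus_open (h @^-1` U).
Proof.
case=> F [[Fc _] hF] oU; rewrite /torus_open.
have -> : Defs.proj (R:=R) (d:=d) @^-1` (h @^-1` U) =
          F @^-1` (Defs.proj (R:=R) (d:=d) @^-1` U).
  by apply/seteqP; split=> x /=; rewrite hF.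
exact: open_comp (fun x _ => Fc x) oU.
Qed.

Lemma torus_open_preimage_iter (h : torus R d -> torus R d) k
    (U : set (torus R d)) :
  C1_torus h -> torus_open U -> torus_open (iter k h @^-1` U).
Proof.
move=> hC; elim: k U => [|k IH] U oU //.
exact: (IH _ (torus_open_preimage hC oU)).
Qed.

Lemma torus_open_measurable (U : set (torus R d)) :
  torus_open U -> measurable (U : set (torusB R d)).
Proof. exact: sub_sigma_algebra. Qed.

End TorusTopology.

Section OrbitSegments.
Variables (R : realType) (d : nat) (f g : torus R d -> torus R d).
Variable mu : probability (torusB R d) R.
Hypotheses (fC1 : C1_torus f) (gC1 : C1_torus g) (fK : cancel f g).
Hypothesis mu_inv : invariant_measure f mu.

Lemma measure_preimage_iterf k U :
  torus_open U -> mu (iter k f @^-1` U) = mu U.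
Proof.
elim: k U => [|k IH] U oU //.
rewrite (IH (f @^-1` U)); last exact: torus_open_preimage.
by apply: mu_inv; exact: torus_open_measurable.
Qed.

Lemma measure_preimageg U : torus_open U -> mu (g @^-1` U) = mu U.
Proof.
move=> oU; rewrite -mu_inv.
  by congr (mu _); apply/seteqP; split=> x /=; rewrite fK.
by apply: torus_open_measurable; exact: torus_open_preimage.
Qed.

Lemma measure_preimage_iterg k U :
  torus_open U -> mu (iter k g @^-1` U) = mu U.
Proof.
elim: k U => [|k IH] U oU //.
rewrite (IH (g @^-1` U)); last exact: torus_open_preimage.
exact: measure_preimageg.
Qed.

Definition orbit_segment_in (U : set (torus R d)) (j : nat) : set (torus R d) :=
  [set x | forall l : int, - (j%:Z) <= l <= j%:Z -> U (iterz f g l x)].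

Lemma orbit_segment_inE U j : orbit_segment_in U j =
  \bigcap_(k < j.+1) (iter k f @^-1` U `&` iter k g @^-1` U).
Proof.
apply/seteqP; split=> x.
- move=> Ux k /= kj; split; first by apply: (Ux k); apply/andP; split; lia.
  case: k kj => [|k] kj; first by apply: (Ux 0); apply/andP; split; lia.
  by apply: (Ux (Negz k)); rewrite NegzE; apply/andP; split; lia.
- move=> Ux [k|k] /andP[lo hi].
  + have kj : (k < j.+1)%N by move: hi; lia.
    by have [] := Ux k kj.
  + have kj : (k.+1 < j.+1)%N by move: lo; rewrite NegzE; lia.
    by have [] := Ux k.+1 kj.
Qed.

Lemma orbit_segment_in_measurable U j :
  torus_open U -> measurable (orbit_segment_in U j : set (torusB R d)).
Proof.
move=> oU; rewrite orbit_segment_inE; apply: bigcap_measurableType => k _.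
by apply: measurableI; apply: torus_open_measurable;
  exact: torus_open_preimage_iter.
Qed.

Lemma measure_orbit_segment_in_ge U j : torus_open U ->
  ((1 - j.+1%:R * (2 * (1 - fine (mu U))))%:E <= mu (orbit_segment_in U j))%E.
Proof.
move=> oU; rewrite orbit_segment_inE.
have mU := torus_open_measurable oU.
have mf k := torus_open_measurable (torus_open_preimage_iter (k:=k) fC1 oU).
have mg k := torus_open_measurable (torus_open_preimage_iter (k:=k) gC1 oU).
apply: probability_bigcap_ge => k _; first exact: measurableI.
rewrite mulrDl mul1r; apply: probabilityI_ge => //.
  by rewrite measure_preimage_iterf // (probability_fineK mu mU) lee_fin; lra.
by rewrite measure_preimage_iterg // (probability_fineK mu mU) lee_fin; lra.
Qed.

Variables (A : nat -> set (torus R d)) (eps : R).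

Definition long_orbit_segments_in m : set (torus R d) :=
  \bigcup_(j in [set j : nat | eps / (1 - fine (mu (A m))) <= j%:R])
    orbit_segment_in (A m) j.

Lemma long_orbit_segments_in_measurable m : torus_open (A m) ->
  measurable (long_orbit_segments_in m : set (torusB R d)).
Proof.
by move=> oA; apply: bigcup_measurable => j _; exact: orbit_segment_in_measurable.
Qed.

Lemma Peps_lim_sup_set : Peps f g mu A eps = lim_sup_set long_orbit_segments_in.
Proof.
apply/seteqP; split=> x.
- move=> [ms [ms_incr xP]] n _.
  have ms_ge i : (i <= ms i)%N.
    by elim: i => [|i IH] //; exact: leq_ltn_trans IH (ms_incr i).
  exists (ms n); first exact: ms_ge.
  by have [j [jP xj]] := xP n; exists j.
- move=> x_limsup.
  have : forall n, exists k, (n <= k)%N /\ long_orbit_segments_in k x.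
    by move=> n; have [k kn xk] := x_limsup n I; exists k.
  move/choice => [next nextP].
  pose ms i := iter i (fun k => next k.+1) (next 0%N).
  exists ms; split; first by move=> i; exact: (nextP _).1.
  move=> i; have [j jP xj] : long_orbit_segments_in (ms i) x.
    by case: i => [|i]; exact: (nextP _).2.
  by exists j.
Qed.

Lemma measure_long_orbit_segments_in_ge m : torus_open (A m) ->
  (mu (A m) < 1)%E -> ((1 - eps / 2)%:E <= mu (A m))%E ->
  ((1 - 4 * eps)%:E <= mu (long_orbit_segments_in m))%E.
Proof.
move=> oA Alt1 Age.
have mA := torus_open_measurable oA.
rewrite (probability_fineK mu mA) lte_fin lee_fin in Alt1 Age.
set p := fine (mu (A m)) in Alt1 Age *.
have a_gt0 : 0 < 1 - p by lra.
have c_ge0 : 0 <= eps / (1 - p) by rewrite divr_ge0 // ltW //; lra.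
have [j /andP[jge jle]] := exists_nat_between c_ge0.
have window : j.+1%:R * (2 * (1 - p)) <= 4 * eps.
  have -> : 4 * eps =
      (eps / (1 - p) + 2) * (2 * (1 - p)) + 2 * (eps - 2 * (1 - p)).
    by field; lra.
  rewrite -natr1; nra.
have segment_sub :
    (mu (orbit_segment_in (A m) j) <= mu (long_orbit_segments_in m))%E.
  apply: le_measure; rewrite ?inE.
  - exact: orbit_segment_in_measurable.
  - exact: long_orbit_segments_in_measurable.
  - by move=> x xj; exists j.
apply: le_trans (le_trans _ (measure_orbit_segment_in_ge j oA)) segment_sub.
by rewrite lee_fin -/p; lra.
Qed.

End OrbitSegments.

Theorem lemma4p4 (R : realType) (d : nat) (f g : torus R d -> torus R d)
  (mu : probability (torusB R d) R) (A : nat -> set (torus R d)) (eps : R) :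
  torus_diffeo f g ->
  invariant_measure f mu ->
  ergodic f mu ->
  (forall m, torus_open (A m)) ->
  (forall m, A m `<=` A m.+1) ->
  f @` (\bigcup_m A m) = \bigcup_m A m ->
  mu (\bigcup_m A m) = 1%E ->
  (forall m, (mu (A m) < 1)%E) ->
  0 < eps ->
  ((1 - 4 * eps)%:E <= mu (Peps f g mu A eps))%E.
Proof.
move=> [fK [_ [fC1 gC1]]] mu_inv _ A_open A_incr _ A_full A_lt1 eps_gt0.
have mA m := torus_open_measurable (A_open m).
have [m0 A_large] : exists m0, ((1 - eps / 2)%:E < mu (A m0))%E.
  by apply: nondecreasing_measure_gt => //; rewrite A_full lte_fin; lra.
have /nondecreasing_seqP A_homo : forall m, (A m <= A m.+1)%O.
  by move=> m; apply/subsetPset.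
rewrite Peps_lim_sup_set; apply: probability_lim_sup_set_ge => [k | n].
  exact: long_orbit_segments_in_measurable.
pose m := maxn n m0.
have mu_Am : ((1 - eps / 2)%:E <= mu (A m))%E.
  apply: le_trans (ltW A_large) (le_measure _ _ _ _); rewrite ?inE //.
  exact/subsetPset/A_homo/leq_maxr.
have := measure_long_orbit_segments_in_ge fC1 gC1 fK mu_inv
  (A_open m) (A_lt1 m) mu_Am.
move/le_trans; apply.
apply: le_measure; rewrite ?inE.
- exact: long_orbit_segments_in_measurable.
- by apply: bigcup_measurable => k _; exact: long_orbit_segments_in_measurable.
- by move=> x xm; exists m => //; exact: leq_maxl.
Qed.
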